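(* If $G$ is a connected cubic graph with $n$ vertices, then $rc(L^2(G))\leq n+1$.
   Context: All graphs are simple, finite and undirected. $L(G)$ is the line graph of $G$ and $L^2(G)=L(L(G))$ is the iterated line graph. For an edge-colouring of a graph (adjacent edges may receive the same colour), a path is rainbow if no two of its edges have the same colour; the graph is rainbow connected if every two vertices are joined by a rainbow path. The rainbow connection number $rc(H)$ of a connected graph $H$ is the smallest number of colours in an edge-colouring making $H$ rainbow connected. *)

From mathcomp Require Import all_boot.
Set Implicit Arguments. Unset Strict Implicit. Unset Printing Implicit Defensive.

Definition simple_graph (T : finType) (e : rel T) : Prop :=
  symmetric e /\ irreflexive e.

Definition connected_graph (T : finType) (e : rel T) : Prop :=
  forall x y : T, connect e x y.

Definition cubic (T : finType) (e : rel T) : Prop :=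
  forall x : T, #|[set y | e x y]| = 3.

Definition is_edge (T : finType) (e : rel T) (A : {set T}) : bool :=
  [exists x, exists y, e x y && (A == [set x; y])].

(* Vertex type of the line graph L(G): the edges of G. *)
Definition LV (T : finType) (e : rel T) : finType :=
  {A : {set T} | is_edge e A}.

Definition Ladj (T : finType) (e : rel T) : rel (LV e) :=
  fun A B => (A != B) && ~~ [disjoint val A & val B].

Definition L2V (T : finType) (e : rel T) : finType := @LV (LV e) (@Ladj T e).
Definition L2adj (T : finType) (e : rel T) : rel (L2V e) := @Ladj (LV e) (@Ladj T e).

(* An edge-colouring with (at most) k colours: the colour of edge uv is
   c [set u; v] (values on non-edges are irrelevant). *)
Definition edge_colours (V : finType) (k : nat) (c : {set V} -> 'I_k)
    (x : V) (p : seq V) : seq 'I_k :=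
  [seq c [set uv.1; uv.2] | uv <- zip (x :: p) p].

Definition rainbow_path (V : finType) (adj : rel V) (k : nat)
    (c : {set V} -> 'I_k) (x y : V) (p : seq V) : bool :=
  [&& path adj x p, last x p == y, uniq (x :: p) & uniq (edge_colours c x p)].

Definition rainbow_connected (V : finType) (adj : rel V) (k : nat)
    (c : {set V} -> 'I_k) : Prop :=
  forall x y : V, exists p : seq V, rainbow_path adj c x y p.

Definition rc_le (V : finType) (adj : rel V) (k : nat) : Prop :=
  exists c : {set V} -> 'I_k, rainbow_connected adj c.

From mathcomp Require Import all_boot.
Set Implicit Arguments. Unset Strict Implicit. Unset Printing Implicit Defensive.

(* A vertex of L^2(G) is a pair of adjacent edges of G; call their common vertex
   its center. When G has maximum degree 3, the vertices of L^2(G) with a given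
   center are pairwise adjacent. Fix a spanning tree of G and colour an edge of
   L^2(G) by the edge s of G shared by its ends: the colour of its child endpoint
   if s is a tree edge, one of two spare colours otherwise, for n + 1 colours in
   all. A tree path v_0 ... v_k lifts to a rainbow path of L^2(G) through the
   vertices {v_(i-1) v_i, v_i v_(i+1)}. A vertex centred at v_0 enters this path
   in one step, coloured by another tree edge at v_0 or by the first spare colour,
   and the path is left in one step towards a vertex centred at v_k, coloured by
   another tree edge at v_k or by the second spare colour. The two non-tree edges
   at a vertex always receive different spare colours, so the needed spare colour
   is available whenever no other tree edge is. *)

Lemma set2_eq (U : finType) (x y v w : U) :
  x != y -> v != w -> v \in [set x; y] -> w \in [set x; y] ->
  [set x; y] = [set v; w].
Proof.
move=> xy vw vxy wxy; apply/eqP; rewrite eq_sym eqEcard !cards2 xy vw leqnn andbT.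
by apply/subsetP => z; rewrite in_set2 => /orP[]/eqP->.
Qed.

Lemma map_uniq_inj_in (A B : eqType) (f : A -> B) (s : seq A) :
  uniq (map f s) -> {in s &, injective f}.
Proof.
elim: s => [//|z s IHs] /= /andP[fz_s /IHs inj_s] x y.
rewrite !inE => /predU1P[->|xs] /predU1P[->|ys] // fxy.
- by move: fz_s; rewrite fxy map_f.
- by move: fz_s; rewrite -fxy map_f.
- exact: inj_s.
Qed.

Lemma infix2_head (A : eqType) (x y a b : A) (q : seq A) :
  uniq (x :: y :: q) -> infix [:: a; b] (x :: y :: q) -> x \in [:: a; b] ->
  a = x /\ b = y.
Proof.
move=> uxq /infixP[[|z s0] [s1 /= []]] => [-> -> _ //|_ def_yq].
case/andP: uxq; rewrite def_yq mem_cat !inE.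
by case/norP=> _ /norP[/negPf-> /norP[/negPf-> _]].
Qed.

Lemma rev_last2 (A : Type) (x y : A) (q : seq A) :
  exists q', rev (x :: y :: q) = last y q :: last x (belast y q) :: q'.
Proof.
by rewrite (lastI x (y :: q)) rev_rcons /= (lastI x (belast y q)) rev_rcons; eexists.
Qed.

Lemma path_last2 (A : Type) (r : rel A) (x y : A) (q : seq A) :
  path r x (y :: q) -> r (last x (belast y q)) (last y q).
Proof. by rewrite lastI rcons_path => /andP[]. Qed.

Section LineGraph.
Variables (U : finType) (f : rel U).

Lemma LV_exists x y : f x y -> exists t : LV f, val t = [set x; y].
Proof.
move=> fxy; have xy_edge : is_edge f [set x; y].
  by apply/existsP; exists x; apply/existsP; exists y; rewrite fxy eqxx.
by exists (Sub _ xy_edge).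
Qed.

Lemma Ladj_sym : symmetric (@Ladj U f).
Proof. by move=> A B; rewrite /Ladj eq_sym disjoint_sym. Qed.

Lemma Ladj_irr : irreflexive (@Ladj U f).
Proof. by move=> A; rewrite /Ladj eqxx. Qed.

Lemma LadjP (A B : LV f) :
  reflect (A != B /\ exists2 v, v \in val A & v \in val B) (Ladj A B).
Proof.
rewrite /Ladj -setI_eq0; apply: (iffP andP) => -[AB meetAB]; split=> //.
  by have [v] := set0Pn _ meetAB; rewrite inE => /andP[]; exists v.
by case: meetAB => v vA vB; apply/set0Pn; exists v; rewrite inE vA vB.
Qed.

Hypothesis firr : irreflexive f.

Lemma LV_edgeP (t : LV f) : exists x y, [/\ f x y, x != y & val t = [set x; y]].
Proof.
have /existsP[x /existsP[y /andP[fxy /eqP ->]]] := valP t.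
by exists x, y; split=> //; apply: contraTneq fxy => ->; rewrite firr.
Qed.

Lemma card_LV (t : LV f) : #|val t| = 2.
Proof. by have [x [y [_ xy ->]]] := LV_edgeP t; rewrite cards2 xy. Qed.

Lemma LV_val2 (t : LV f) v w :
  v != w -> v \in val t -> w \in val t -> val t = [set v; w].
Proof. by have [x [y [_ xy ->]]] := LV_edgeP t; apply: set2_eq. Qed.

Lemma LV_inj2 (t1 t2 : LV f) v w : v != w ->
  v \in val t1 -> w \in val t1 -> v \in val t2 -> w \in val t2 -> t1 = t2.
Proof.
move=> vw vt1 wt1 vt2 wt2; apply: val_inj.
by rewrite (LV_val2 vw vt1 wt1) (LV_val2 vw vt2 wt2).
Qed.

End LineGraph.

Section RainbowPaths.
Variables (V : finType) (adj : rel V) (k : nat) (c : {set V} -> 'I_k).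

Lemma edge_colours_cat x p q :
  edge_colours c x (p ++ q) = edge_colours c x p ++ edge_colours c (last x p) q.
Proof. by elim: p x => [|a p IHp] x //; exact: (congr1 (cons _) (IHp a)). Qed.

Lemma edge_colours_cons x y p :
  edge_colours c x (y :: p) = c [set x; y] :: edge_colours c y p.
Proof. by []. Qed.

Lemma rainbow_path0 x : rainbow_path adj c x x [::].
Proof. by rewrite /rainbow_path /= eqxx. Qed.

Lemma rainbow_path1 x y : adj x y -> x != y -> rainbow_path adj c x y [:: y].
Proof. by move=> xy nxy; rewrite /rainbow_path /= xy eqxx inE nxy. Qed.

Lemma rainbow_path_cons x y z p :
  rainbow_path adj c y z p -> adj x y -> x \notin y :: p ->
  c [set x; y] \notin edge_colours c y p -> rainbow_path adj c x z (y :: p).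
Proof.
case/and4P=> pp lp up cp xy xp xc.
by apply/and4P; split; rewrite /= ?xy ?xp ?xc.
Qed.

Lemma rainbow_path_rcons x y z p :
  rainbow_path adj c x y p -> adj y z -> z \notin x :: p ->
  c [set y; z] \notin edge_colours c x p -> rainbow_path adj c x z (rcons p z).
Proof.
case/and4P=> pp /eqP lp up cp yz zp zc; apply/and4P; split.
- by rewrite rcons_path pp lp.
- by rewrite last_rcons.
- by rewrite -rcons_cons rcons_uniq zp.
- by rewrite -cats1 edge_colours_cat cats1 rcons_uniq lp zc.
Qed.

End RainbowPaths.

Section SpanningTree.
Variables (T : finType) (e : rel T).
Hypotheses (sym_e : symmetric e) (conn_e : connected_graph e).
Variable r : T.

Definition dist_at (x : T) (m : nat) : bool :=
  [exists p : m.-tuple T, path e r p && (last r p == x)].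

Lemma dist_at_exists x : exists m, dist_at x m.
Proof.
have /connectP[p pp ->] := conn_e r x.
by exists (size p); apply/existsP; exists (in_tuple p); rewrite pp eqxx.
Qed.

Definition dist x := ex_minn (dist_at_exists x).

Lemma dist_descent x : x != r -> exists2 y, e x y & dist y < dist x.
Proof.
move=> xr; rewrite {2}/dist; case: ex_minnP => m /existsP[[p /= /eqP size_p]].
case/lastP: p size_p => [|p y] size_p /andP[].
  by rewrite /= => _ /eqP x_r; rewrite x_r eqxx in xr.
rewrite rcons_path last_rcons => /andP[rp ey] /eqP <- _.
exists (last r p); first by rewrite sym_e.
rewrite /dist; case: ex_minnP => m' _ /(_ (size p)) min_m'.
rewrite (leq_ltn_trans (min_m' _)) -?size_p ?size_rcons //.
by apply/existsP; exists (in_tuple p); rewrite rp eqxx.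
Qed.

Definition parent x := odflt r [pick y | e x y && (dist y < dist x)].

Lemma parentP x : x != r -> e x (parent x) /\ dist (parent x) < dist x.
Proof.
move=> xr; rewrite /parent; case: pickP => [y /andP[] //|none].
by have [y exy lt_yx] := dist_descent xr; move: (none y); rewrite exy lt_yx.
Qed.

Definition tree_edge x y :=
  ((x != r) && (parent x == y)) || ((y != r) && (parent y == x)).

Lemma tree_edge_sym : symmetric tree_edge.
Proof. by move=> x y; rewrite /tree_edge orbC. Qed.

Lemma tree_edgeW x y : tree_edge x y -> e x y.
Proof.
case/orP=> /andP[nr /eqP <-]; first by case: (parentP nr).
by rewrite sym_e; case: (parentP nr).
Qed.

Lemma connect_tree_root x : connect tree_edge x r.
Proof.
elim: {x}_.+1 {-2}x (ltnSn (dist x)) => // m IHm x lt_xm.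
have [-> | xr] := eqVneq x r; first exact: connect0.
have [_ lt_px] := parentP xr.
apply: connect_trans (IHm _ (leq_trans lt_px lt_xm)).
by apply: connect1; rewrite /tree_edge xr eqxx.
Qed.

Lemma tree_path v w : v != w -> exists v1 q,
  [/\ path tree_edge v (v1 :: q), uniq (v :: v1 :: q), last v1 q = w
    & tree_edge v w -> v1 :: q = [:: w]].
Proof.
move=> vw; have [vw_tree | not_tree] := boolP (tree_edge v w).
  by exists w, [::]; rewrite /= vw_tree inE vw.
have: connect tree_edge v w.
  apply: connect_trans (connect_tree_root v) _.
  by rewrite (sym_connect_sym tree_edge_sym); apply: connect_tree_root.
case/connectP => p /shortenP[[|v1 q] pq uq _] def_w.
  by rewrite def_w eqxx in vw.
by exists v1, q; split=> // /(negP not_tree).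
Qed.

End SpanningTree.

Section Colouring.
Variables (T : finType) (e : rel T).
Hypotheses (sym_e : symmetric e) (irr_e : irreflexive e) (conn_e : connected_graph e).
Hypothesis deg3 : forall v, #|[set y | e v y]| <= 3.
Variable r : T.

Local Notation D := (LV e).
Local Notation V2 := (L2V e).
Local Notation L2 := (@L2adj T e).
Local Notation n := #|T|.
Local Notation parent := (parent conn_e r).
Local Notation tree_edge := (tree_edge conn_e r).

Definition edges_at (v : T) : {set D} := [set t : D | v \in val t].

Lemma card_edges_at v : #|edges_at v| <= 3.
Proof.
pose other (t : D) := odflt v [pick y | (y \in val t) && (y != v)].
have otherP t : t \in edges_at v -> e v (other t) /\ val t = [set v; other t].
  rewrite inE => vt; have [x [y [exy _ t_xy]]] := LV_edgeP irr_e t.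
  have [o [evo t_vo]] : exists o, e v o /\ val t = [set v; o].
    move: vt; rewrite t_xy in_set2 => /orP[]/eqP->; first by exists y.
    by exists x; rewrite setUC sym_e.
  have ov : o != v by apply: contraTneq evo => ->; rewrite irr_e.
  rewrite /other; case: pickP => [z /andP[zt zv]|/(_ o)]; last by rewrite t_vo set22 ov.
  by move: zt; rewrite t_vo in_set2 (negPf zv) /= => /eqP->.
apply: leq_trans (deg3 v); rewrite -(card_in_imset (f := other)); last first.
  by move=> t1 t2 /otherP[_ t1E] /otherP[_ t2E] eq_o; apply: val_inj; rewrite t1E t2E eq_o.
by apply/subset_leq_card/subsetP => _ /imsetP[t /otherP[evo _] ->]; rewrite inE.
Qed.

Lemma edges_at_eq3 v (a b h : D) : v \in val a -> v \in val b -> v \in val h ->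
  a != b -> a != h -> b != h -> edges_at v = [set a; b; h].
Proof.
move=> va vb vh ab ah bh; apply/esym/eqP; rewrite eqEcard; apply/andP; split.
  by apply/subsetP => t; rewrite !inE -orbA => /or3P[]/eqP->.
apply: leq_trans (card_edges_at v) _; rewrite [[set a; b; h]]setUC cardsU1 cards2 ab.
by rewrite !inE negb_or (eq_sym h) ah (eq_sym h) bh.
Qed.

Definition center (X : V2) : T :=
  odflt r [pick v | [forall A in val X, v \in val A]].

Lemma center_mem (X : V2) (A : D) : A \in val X -> center X \in val A.
Proof.
have [A' [B' [/LadjP[_ [v vA' vB']] _ X_AB]]] := LV_edgeP (@Ladj_irr _ e) X.
rewrite /center; case: pickP => [u /forall_inP|/(_ v)/negP[]]; first exact.
by apply/forall_inP => C; rewrite X_AB in_set2 => /orP[]/eqP->.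
Qed.

Lemma center_eq (X : V2) (A B : D) v : A \in val X -> B \in val X -> A != B ->
  v \in val A -> v \in val B -> center X = v.
Proof.
move=> AX BX AB vA vB; apply/eqP; apply: contraNT AB => cv; apply/eqP.
by apply: (LV_inj2 irr_e cv) => //; apply: center_mem.
Qed.

Lemma same_center_adj (X Y : V2) : center X = center Y -> X != Y -> L2 X Y.
Proof.
move=> cXY XY; apply/LadjP; split=> //.
have: val X :&: val Y != set0.
  apply: contraTneq (card_edges_at (center X)) => XY0; rewrite -ltnNge.
  apply: (@leq_trans #|val X :|: val Y|).
    by rewrite cardsU XY0 cards0 !(card_LV (@Ladj_irr _ e)).
  apply/subset_leq_card/subsetP => A; rewrite !inE.
  by case/orP=> /center_mem; rewrite ?cXY.
by case/set0Pn => A; rewrite inE => /andP[]; exists A.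
Qed.

Definition in_tree (t : D) : bool :=
  [exists x, (x != r) && (val t == [set x; parent x])].

Definition child (t : D) : T :=
  odflt r [pick x | (x != r) && (val t == [set x; parent x])].

Lemma childP (t : D) : in_tree t -> child t != r /\ val t = [set child t; parent (child t)].
Proof.
case/existsP=> x /andP[xr /eqP t_x]; rewrite /child.
by case: pickP => [y /andP[yr /eqP]|/(_ x)] //; rewrite xr t_x eqxx.
Qed.

Lemma in_tree_edge (t : D) a b : val t = [set a; b] -> in_tree t = tree_edge a b.
Proof.
move=> t_ab; apply/existsP/idP => [[x /andP[xr /eqP]]|].
  have [exp _] := parentP sym_e conn_e xr.
  have xp : x != parent x by apply: contraTneq exp => <-; rewrite irr_e.
  rewrite t_ab => ab_x; have := cards2 a b; rewrite ab_x cards2 xp.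
  have: a \in [set x; parent x] by rewrite -ab_x set21.
  have: b \in [set x; parent x] by rewrite -ab_x set22.
  rewrite !in_set2 /tree_edge => /orP[]/eqP-> /orP[]/eqP-> //=; rewrite ?eqxx ?xr ?orbT //.
rewrite t_ab; case/orP=> /andP[nr /eqP <-]; [exists a | exists b; rewrite setUC];
  by rewrite nr eqxx.
Qed.

Lemma in_tree_exists x y : tree_edge x y -> exists2 t : D, in_tree t & val t = [set x; y].
Proof.
move=> xy; have [t tE] := LV_exists (tree_edgeW sym_e xy).
by exists t; rewrite ?(in_tree_edge tE).
Qed.

(* The n - 1 tree edges are coloured injectively by their child vertex; the rank
   of the root and the extra colour n serve as two spare colours. *)
Definition tree_colour (t : D) : 'I_n.+1 := widen_ord (leqnSn n) (enum_rank (child t)).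
Definition spare1 : 'I_n.+1 := widen_ord (leqnSn n) (enum_rank r).
Definition spare2 : 'I_n.+1 := ord_max.

Definition spare (v : T) (s : D) : 'I_n.+1 :=
  if [exists t in edges_at v, ~~ in_tree t && (enum_rank t < enum_rank s)]
  then spare2 else spare1.

Definition edge_colour (v : T) (s : D) : 'I_n.+1 :=
  if in_tree s then tree_colour s else spare v s.

(* The colour of an edge {X, Y} of L^2(G) is read off the edge s of G shared by
   X and Y and, when s is not a tree edge, off the center of X. Such an edge is
   only ever used between vertices with the same center, so the choice of X in
   the pick does not matter. *)
Definition colouring (Z : {set V2}) : 'I_n.+1 :=
  if [pick Xs : V2 * D | (Xs.1 \in Z) && [forall Y in Z, Xs.2 \in val Y]] is Some Xs
  then edge_colour (center Xs.1) Xs.2 else spare1.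

Lemma tree_colour_inj (t1 t2 : D) :
  in_tree t1 -> in_tree t2 -> tree_colour t1 = tree_colour t2 -> t1 = t2.
Proof.
move=> /childP[_ t1E] /childP[_ t2E] /(congr1 val) /= /ord_inj /enum_rank_inj eq_child.
by apply: val_inj; rewrite t1E t2E eq_child.
Qed.

Lemma tree_colour_spare1 (t : D) : in_tree t -> tree_colour t != spare1.
Proof.
case/childP=> cr _; apply: contra cr => /eqP /(congr1 val) /= /ord_inj.
by move/enum_rank_inj->.
Qed.

Lemma tree_colour_spare2 (t : D) : tree_colour t != spare2.
Proof. by rewrite -val_eqE /= neq_ltn ltn_ord. Qed.

Lemma spare1_spare2 : spare1 != spare2.
Proof. by rewrite -val_eqE /= neq_ltn ltn_ord. Qed.

Lemma spare_neq v (a b h : D) : v \in val a -> v \in val b -> v \in val h ->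
  a != b -> a != h -> b != h -> in_tree h -> ~~ in_tree a -> ~~ in_tree b ->
  spare v a != spare v b.
Proof.
wlog lt_ab : a b / enum_rank a < enum_rank b.
  move=> gen va vb vh ab ah bh Th Ta Tb.
  case: (ltngtP (enum_rank a) (enum_rank b)) => [lt_ab|lt_ba|].
  - exact: gen.
  - by rewrite eq_sym gen // eq_sym.
  - by move/ord_inj/enum_rank_inj => eq_ab; rewrite eq_ab eqxx in ab.
move=> va vb vh ab ah bh Th Ta Tb.
have ->: spare v b = spare2.
  by rewrite /spare; case: ifPn => // /exists_inP[]; exists a; rewrite ?inE ?Ta.
rewrite /spare ifN ?spare1_spare2 //; apply/exists_inP => -[t].
rewrite (edges_at_eq3 va vb vh ab ah bh) !inE -orbA => /or3P[]/eqP->.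
- by rewrite ltnn andbF.
- by rewrite ltnNge (ltnW lt_ab) andbF.
- by rewrite Th.
Qed.

Lemma colouring_edge (X Y : V2) (s : D) : X != Y -> s \in val X -> s \in val Y ->
  in_tree s \/ center X = center Y -> colouring [set X; Y] = edge_colour (center X) s.
Proof.
move=> XY sX sY tree_or_center; rewrite /colouring.
case: pickP => [[X' s'] /= /andP[X'_XY /forall_inP s'_XY]|/(_ (X, s))]; last first.
  move=> /negbT/negP[]; rewrite /= set21; apply/forall_inP => Z.
  by rewrite in_set2 => /orP[]/eqP->.
have ->: s' = s.
  apply/eqP; apply: contraNT XY => s's; apply/eqP.
  have s'X : s' \in val X by apply: s'_XY; rewrite set21.
  have s'Y : s' \in val Y by apply: s'_XY; rewrite set22.
  by apply: (LV_inj2 (@Ladj_irr _ e) s's).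
move: X'_XY; rewrite in_set2 => /orP[]/eqP-> //.
by case: tree_or_center => [s_tree|->] //; rewrite /edge_colour s_tree.
Qed.

Lemma L2V_pair (A B : D) v : A != B -> v \in val A -> v \in val B ->
  exists2 S : V2, val S = [set A; B] & center S = v.
Proof.
move=> AB vA vB; have [S SE] : exists S : V2, val S = [set A; B].
  by apply: LV_exists; apply/LadjP; split=> //; exists v.
by exists S => //; apply: (center_eq (A := A) (B := B)); rewrite ?SE ?set21 ?set22.
Qed.

Lemma step_along (X : V2) (h s : D) :
  s \in val X -> h \notin val X -> center X \in val h ->
  exists2 S : V2, center S = center X /\ h \in val S &
    [/\ L2 X S, X != S & colouring [set X; S] = edge_colour (center X) s].
Proof.
move=> sX hX vh; have vs := center_mem sX.
have hs : h != s by apply: contraNneq hX => ->.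
have [S S_hs cS] := L2V_pair hs vh vs.
have sS : s \in val S by rewrite S_hs set22.
have XS : X != S by apply: contraNneq hX => ->; rewrite S_hs set21.
exists S; first by rewrite S_hs set21.
split=> //; first by apply/LadjP; split=> //; exists s.
by rewrite (colouring_edge XS sX sS) //; right.
Qed.

(* The colours allowed for a step from a vertex of L^2(G) centred at v to one
   containing the tree edge h: the spare colour k0 reserved for that end of the
   path, or the colour of another tree edge at v. *)
Definition end_colour (v : T) (h : D) (k0 k : 'I_n.+1) : Prop :=
  k = k0 \/ exists s, [/\ in_tree s, v \in val s, s != h & k = tree_colour s].

Lemma step_to_edge (X : V2) (h : D) (k0 : 'I_n.+1) :
  center X \in val h -> in_tree h -> k0 \in [:: spare1; spare2] ->
  exists2 S : V2, center S = center X /\ h \in val S &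
    S = X \/ [/\ L2 X S, X != S & end_colour (center X) h k0 (colouring [set X; S])].
Proof.
move=> vh h_tree k0_spare; set v := center X in vh *.
have [hX|hX] := boolP (h \in val X); first by exists X => //; left.
suff [s sX s_ok] : exists2 s, s \in val X & end_colour v h k0 (edge_colour v s).
  have [S cS [XS_adj XS colXS]] := step_along sX hX vh.
  by exists S => //; right; rewrite colXS.
have [a [b [_ ab X_ab]]] := LV_edgeP (@Ladj_irr _ e) X.
have aX : a \in val X by rewrite X_ab set21.
have bX : b \in val X by rewrite X_ab set22.
have ha : h != a by apply: contraNneq hX => ->.
have hb : h != b by apply: contraNneq hX => ->.
have [a_tree|a_spare] := boolP (in_tree a).
  exists a => //; right; exists a.
  by rewrite /edge_colour a_tree (center_mem aX) eq_sym ha.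
have [b_tree|b_spare] := boolP (in_tree b).
  exists b => //; right; exists b.
  by rewrite /edge_colour b_tree (center_mem bX) eq_sym hb.
have spare_ab : spare v a != spare v b.
  by apply: spare_neq vh ab _ _ h_tree a_spare b_spare; rewrite ?center_mem // eq_sym.
have spare_in x : spare v x \in [:: spare1; spare2].
  by rewrite /spare; case: ifP; rewrite !inE eqxx ?orbT.
have [ak0|ak0] := eqVneq (spare v a) k0.
  by exists a => //; left; rewrite /edge_colour (negPf a_spare).
exists b => //; left; rewrite /edge_colour (negPf b_spare).
move: (spare_in a) (spare_in b) k0_spare spare_ab ak0; rewrite !inE.
by do 3!case/orP=> /eqP->; rewrite ?eqxx.
Qed.

Definition at_edge (S : V2) (x y : T) : Prop :=
  center S = x /\ exists2 t : D, t \in val S & val t = [set x; y].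

Definition path_colour (s : seq T) (k : 'I_n.+1) : Prop :=
  exists t a b, [/\ k = tree_colour t, in_tree t, val t = [set a; b] & infix [:: a; b] s].

Lemma path_colour_rev s k : path_colour s k -> path_colour (rev s) k.
Proof.
case=> t [a [b [kt t_tree t_ab ab_s]]]; exists t, b, a.
by rewrite setUC -infix_rev revK.
Qed.

Lemma end_colour_path v v1 q (h : D) k0 k :
  uniq (v :: v1 :: q) -> val h = [set v; v1] -> k0 \in [:: spare1; spare2] ->
  end_colour v h k0 k -> ~ path_colour (v :: v1 :: q) k.
Proof.
move=> uq hE k0_spare [->|[s [s_tree vs sh ->]]] [t [a [b [kt t_tree t_ab ab_s]]]].
  move: k0_spare (tree_colour_spare1 t_tree) (tree_colour_spare2 t).
  by rewrite !inE kt => /orP[]/eqP->; rewrite eqxx.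
have st := tree_colour_inj s_tree t_tree kt.
have [av bv1] : a = v /\ b = v1.
  by apply: infix2_head uq ab_s _; move: vs; rewrite st t_ab in_set2 !inE orbC.
by move/negP: sh; apply; apply/eqP/val_inj; rewrite st t_ab av bv1 hE.
Qed.

Lemma path_colour_notin s (t : D) x :
  in_tree t -> x \in val t -> x \notin s -> ~ path_colour s (tree_colour t).
Proof.
move=> t_tree xt /negP xs [t' [a [b [kt t'_tree t'_ab ab_s]]]].
apply: xs (mem_infix ab_s _); rewrite (tree_colour_inj t_tree t'_tree kt) t'_ab in xt.
by move: xt; rewrite in_set2 !inE.
Qed.

Lemma tree_step (S S' : V2) (t : D) : center S != center S' ->
  t \in val S -> t \in val S' -> in_tree t ->
  L2 S S' /\ colouring [set S; S'] = tree_colour t.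
Proof.
move=> cSS' tS tS' t_tree; have SS' : S != S' by apply: contraNneq cSS' => ->.
split; first by apply/LadjP; split=> //; exists t.
by rewrite (colouring_edge SS' tS tS') /edge_colour ?t_tree //; left.
Qed.

Lemma lift_tree_path q : forall v0 v1 (S F : V2),
  path tree_edge v0 (v1 :: q) -> uniq (v0 :: v1 :: q) ->
  at_edge S v0 v1 -> at_edge F (last v1 q) (last v0 (belast v1 q)) ->
  exists p, [/\ rainbow_path L2 colouring S F p, map center (S :: p) = v0 :: v1 :: q
    & forall k, k \in edge_colours colouring S p -> path_colour (v0 :: v1 :: q) k].
Proof.
elim: q => [|v2 q IHq] v0 v1 S F /andP[t01 pq] uq [cS [t1 t1S t1E]].
  case=> cF [tk tkF tkE].
  have v01 : v0 != v1 by move: uq; rewrite /= inE andbT.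
  have t1F : t1 \in val F by rewrite (_ : t1 = tk) //; apply: val_inj; rewrite t1E tkE setUC.
  have t1_tree : in_tree t1 by rewrite (in_tree_edge t1E).
  have [SF colSF] : L2 S F /\ colouring [set S; F] = tree_colour t1.
    by apply: tree_step; rewrite ?cS ?cF.
  exists [:: F]; split.
  - by apply: rainbow_path1 => //; apply: contraNneq v01 => SF'; rewrite -cS SF' cF.
  - by rewrite /= cS cF.
  move=> k; rewrite edge_colours_cons inE colSF => /eqP->.
  by exists t1, v0, v1; rewrite infix_refl.
move=> at_F; have t12 : tree_edge v1 v2 by case/andP: pq.
have [v0_notin uq'] := andP uq.
have [t2 _ t2E] := in_tree_exists t12.
have v1t1 : v1 \in val t1 by rewrite t1E set22.
have v1t2 : v1 \in val t2 by rewrite t2E set21.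
have t12_neq : t1 != t2.
  apply: contraNneq v0_notin => t12_eq.
  by move: (set21 v0 v1); rewrite -t1E t12_eq t2E in_set2 !inE => /orP[]->; rewrite ?orbT.
have [S' S'E cS'] := L2V_pair t12_neq v1t1 v1t2.
have t2S' : t2 \in val S' by rewrite S'E set22.
have [p [rp cp colp]] := IHq v1 v2 S' F pq uq' (conj cS' (ex_intro2 _ _ t2 t2S' t2E)) at_F.
have t1_tree : in_tree t1 by rewrite (in_tree_edge t1E).
have [SS' colSS'] : L2 S S' /\ colouring [set S; S'] = tree_colour t1.
  apply: tree_step; rewrite ?S'E ?set21 // cS cS'.
  by move: v0_notin; rewrite inE negb_or => /andP[].
exists (S' :: p); split.
- apply: rainbow_path_cons rp SS' _ _.
    by apply: contra v0_notin => /(map_f center); rewrite cp cS.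
  by rewrite colSS'; apply/negP => /colp; apply: path_colour_notin t1_tree _ v0_notin;
    rewrite t1E set21.
- by rewrite /= cS -cp.
move=> k; rewrite edge_colours_cons inE => /orP[/eqP->|/colp].
  by rewrite colSS'; exists t1, v0, v1; split=> //; apply: prefix_infix.
case=> t [a [b [kt t_tree t_ab ab_s]]]; exists t, a, b; split=> //.
exact: infix_trans ab_s (infix_cons _ _).
Qed.

Lemma end_colours_disjoint v w (h1 hk : D) k :
  (forall s : D, in_tree s -> v \in val s -> w \in val s -> s = h1) ->
  end_colour v h1 spare1 k -> end_colour w hk spare2 k -> False.
Proof.
move=> vw_h1 [->|[s [s_tree vs sh1 ->]]] [|[t [t_tree wt _]]].
- by apply/eqP; rewrite spare1_spare2.
- by move=> eq_k; move: (tree_colour_spare1 t_tree); rewrite -eq_k eqxx.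
- by apply/eqP; rewrite tree_colour_spare2.
move=> /(tree_colour_inj s_tree t_tree) st; move: sh1.
by rewrite (vw_h1 s) ?eqxx // st.
Qed.

Lemma rainbow_path_end_step (S F Y : V2) p (hk : D) k0 :
  rainbow_path L2 colouring S F p -> uniq (map center (S :: p)) -> center F = center Y ->
  (forall k, end_colour (center Y) hk k0 k -> k \notin edge_colours colouring S p) ->
  F = Y \/ [/\ L2 Y F, Y != F & end_colour (center Y) hk k0 (colouring [set Y; F])] ->
  exists p', [/\ rainbow_path L2 colouring S Y p', {subset p' <= rcons p Y} &
    forall k, k \in edge_colours colouring S p' ->
      k \in edge_colours colouring S p \/ end_colour (center Y) hk k0 k].
Proof.
move=> rp uniq_p cF end_ok [<-|[YF_adj YF colYF]].
  by exists p; split=> // [y yp|k kp]; [rewrite mem_rcons inE yp orbT | left].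
have lastp : last S p = F by case/and4P: rp => _ /eqP.
exists (rcons p Y); split=> //.
- apply: rainbow_path_rcons rp _ _ _; first by rewrite /L2adj Ladj_sym.
    apply: contra YF => Y_in; apply/eqP.
    apply: (map_uniq_inj_in (f := center) uniq_p Y_in) => //.
    by rewrite -lastp mem_last.
  by rewrite setUC; apply: end_ok.
move=> k; rewrite -cats1 edge_colours_cat mem_cat lastp => /orP[]; first by left.
by rewrite edge_colours_cons inE setUC => /eqP->; right.
Qed.

Lemma rainbow_connected_colouring : rainbow_connected L2 colouring.
Proof.
move=> X0 Y0.
have [<-|X0Y0] := eqVneq X0 Y0; first by exists [::]; apply: rainbow_path0.
have [cXY|vw] := eqVneq (center X0) (center Y0).
  by exists [:: Y0]; apply: rainbow_path1 => //; apply: same_center_adj.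
set v := center X0 in vw *; set w := center Y0 in vw *.
have [v1 [q [pq uq last_q short]]] := tree_path sym_e conn_e r vw.
have [q' rev_s] := rev_last2 v v1 q; rewrite last_q in rev_s.
set u := last v (belast v1 q) in rev_s.
have t01 : tree_edge v v1 by case/andP: pq.
have tuw : tree_edge w u by rewrite tree_edge_sym -last_q; apply: path_last2 pq.
have [h1 h1_tree h1E] := in_tree_exists t01.
have [hk hk_tree hkE] := in_tree_exists tuw.
have vh1 : v \in val h1 by rewrite h1E set21.
have whk : w \in val hk by rewrite hkE set21.
have [S [cS h1S] stepS] := step_to_edge vh1 h1_tree (mem_head spare1 [:: spare2]).
have [F [cF hkF] stepF] := step_to_edge whk hk_tree (mem_last spare1 [:: spare2]).
have at_F : at_edge F (last v1 q) u by rewrite last_q; split=> //; exists hk.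
have [p [rp cp colp]] := lift_tree_path pq uq (conj cS (ex_intro2 _ _ h1 h1S h1E)) at_F.
have end_ok k : end_colour w hk spare2 k -> k \notin edge_colours colouring S p.
  move=> k_end; apply/negP => /colp /path_colour_rev; rewrite rev_s.
  apply: end_colour_path hkE (mem_last _ _) k_end.
  by rewrite -rev_s rev_uniq.
have [p2 [rp2 p2_sub colp2]] :=
  rainbow_path_end_step rp (etrans (congr1 uniq cp) uq) cF end_ok stepF.
case: stepS => [SX0|[X0S_adj X0S colX0S]]; first by exists p2; rewrite -SX0.
exists (S :: p2); apply: rainbow_path_cons rp2 X0S_adj _ _.
  rewrite inE negb_or X0S; apply: contra (andP uq).1 => /p2_sub.
  rewrite mem_rcons inE (negPf X0Y0) => /(map_f center).
  by case: cp => _ <-.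
have vw_h1 (t : D) : in_tree t -> v \in val t -> w \in val t -> t = h1.
  move=> t_tree vt wt; have t_vw := LV_val2 irr_e vw vt wt.
  move: short; rewrite -(in_tree_edge t_vw) t_tree => /(_ isT) [v1w _].
  by apply: val_inj; rewrite t_vw h1E v1w.
apply/negP => /colp2 [/colp|]; first exact: end_colour_path uq h1E (mem_head _ _) colX0S.
exact: end_colours_disjoint vw_h1 colX0S.
Qed.

End Colouring.

Theorem corollary4p1 (T : finType) (e : rel T) :
  simple_graph e -> connected_graph e -> cubic e ->
  rc_le (@L2adj T e) #|T|.+1.
Proof.
move=> [sym_e irr_e] conn_e cubic_e.
have deg3 v : #|[set y | e v y]| <= 3 by rewrite cubic_e.
have [r _|no_vertex] := pickP (@predT T).
  by exists (colouring conn_e r); apply: rainbow_connected_colouring.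
exists (fun _ => ord0) => X.
have [A _] := LV_edgeP (@Ladj_irr _ e) X.
have [x _] := LV_edgeP irr_e A.
by have := no_vertex x.
Qed.
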